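(* On mixed graphs without directed cycles, the parameter $G\mapsto\mathrm{nd}(G)$ and the parameter $G\mapsto\mathrm{nd}(G^+)$ are incomparable (neither bounds the other), and likewise $G\mapsto\mathrm{cw}(G)$ and $G\mapsto\mathrm{cw}(G^+)$ are incomparable; here $\mathrm{nd}$ and $\mathrm{cw}$ denote neighborhood diversity and cliquewidth of the underlying undirected graph.
   Context: A mixed graph $G$ consists of a finite vertex set $V(G)$, a set $E(G)$ of undirected edges and a set $A(G)$ of directed arcs; it is simple and contains no directed cycle. The underlying undirected graph replaces every arc by an edge. The transitive closure $G^+$ is obtained by adding every arc $(u,v)$ such that $G$ has a directed path from $u$ to $v$, and removing any edge parallel to such an arc. For an undirected graph, $u,v$ have the same type if $N(u)\setminus\{v\}=N(v)\setminus\{u\}$ and neighborhood diversity is the number of types. A parameter $\alpha$ bounds $\beta$ if there is a computable $f$ with $\beta(G)\le f(\alpha(G))$ for all mixed graphs $G$ without directed cycles; two parameters are incomparable if neither bounds the other. *)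

From Stdlib Require Import ClassicalEpsilon.
From mathcomp Require Import all_boot.

Set Implicit Arguments.
Unset Strict Implicit.
Unset Printing Implicit Defensive.

Record mixed_graph := MixedGraph {
  mg_n : nat;
  mg_E : rel 'I_mg_n;
  mg_A : rel 'I_mg_n
}.
Arguments mg_E : clear implicits.
Arguments mg_A : clear implicits.

Definition mixed_ok (G : mixed_graph) : Prop :=
  [/\ (forall u, ~~ mg_E G u u),
      (forall u v, mg_E G u v = mg_E G v u),
      (forall u, ~~ mg_A G u u),
      (forall u v, mg_E G u v -> ~~ mg_A G u v /\ ~~ mg_A G v u)
    & (* no directed cycle: no arc u->v with a directed path back from v to u *)
      (forall u v, mg_A G u v -> ~~ connect (mg_A G) v u)].

(* directed path of length >= 1 from u to v *)
Definition reach (G : mixed_graph) : rel 'I_(mg_n G) :=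
  fun u v => [exists w, mg_A G u w && connect (mg_A G) w v].

Arguments reach : clear implicits.

Definition tclosure (G : mixed_graph) : mixed_graph :=
  @MixedGraph (mg_n G)
    (fun u v => [&& mg_E G u v, ~~ reach G u v & ~~ reach G v u])
    (reach G).

Definition underlying (G : mixed_graph) : rel 'I_(mg_n G) :=
  fun u v => [|| mg_E G u v, mg_A G u v | mg_A G v u].

Arguments underlying : clear implicits.

Definition same_type n (e : rel 'I_n) (u v : 'I_n) : bool :=
  [forall w, ((w != u) && (w != v)) ==> (e u w == e v w)].

Definition nd n (e : rel 'I_n) : nat :=
  #|[set [set v | same_type e u v] | u : 'I_n]|.

(* Cliquewidth via k-expressions.  Vertices of an expression are numbered
   0 .. cw_size t - 1 (leaves from left to right).                      *)
Inductive cwterm :=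
| CVert of nat
| CUnion of cwterm & cwterm
| CRelab of nat & nat & cwterm
| CJoin of nat & nat & cwterm.

Fixpoint cw_size (t : cwterm) : nat :=
  match t with
  | CVert _ => 1
  | CUnion a b => cw_size a + cw_size b
  | CRelab _ _ a => cw_size a
  | CJoin _ _ a => cw_size a
  end.

Fixpoint cw_label (t : cwterm) (u : nat) : nat :=
  match t with
  | CVert i => i
  | CUnion a b => if u < cw_size a then cw_label a u else cw_label b (u - cw_size a)
  | CRelab i j a => let l := cw_label a u in if l == i then j else l
  | CJoin _ _ a => cw_label a u
  end.

Fixpoint cw_edge (t : cwterm) (u v : nat) : bool :=
  match t with
  | CVert _ => false
  | CUnion a b =>
      let na := cw_size a in
      if (u < na) && (v < na) then cw_edge a u v
      else if (na <= u) && (na <= v) then cw_edge b (u - na) (v - na)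
      else false
  | CRelab _ _ a => cw_edge a u v
  | CJoin i j a =>
      cw_edge a u v ||
      ((u != v) &&
       (((cw_label a u == i) && (cw_label a v == j)) ||
        ((cw_label a u == j) && (cw_label a v == i))))
  end.

Fixpoint cw_ok (k : nat) (t : cwterm) : bool :=
  match t with
  | CVert i => i < k
  | CUnion a b => cw_ok k a && cw_ok k b
  | CRelab i j a => [&& i < k, j < k & cw_ok k a]
  | CJoin i j a => [&& i < k, j < k, i != j & cw_ok k a]
  end.

Definition cw_le n (e : rel 'I_n) (k : nat) : Prop :=
  n = 0 \/
  exists (t : cwterm) (f : 'I_n -> nat),
    [/\ cw_ok k t, cw_size t = n, injective f, (forall x, f x < n)
      & (forall x y, e x y = cw_edge t (f x) (f y))].

Definition decideb (P : Prop) : bool :=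
  if excluded_middle_informative P then true else false.

(* cliquewidth: least k with cw_le e k (cw_le e n always holds, so the
   search range 0..n suffices) *)
Definition cw n (e : rel 'I_n) : nat :=
  find (fun k => decideb (cw_le e k)) (iota 0 n.+1).

Definition nd_param (G : mixed_graph) : nat := nd (underlying G).
Definition nd_plus_param (G : mixed_graph) : nat := nd (underlying (tclosure G)).
Definition cw_param (G : mixed_graph) : nat := cw (underlying G).
Definition cw_plus_param (G : mixed_graph) : nat := cw (underlying (tclosure G)).

Definition bounds (alpha beta : mixed_graph -> nat) : Prop :=
  exists f : nat -> nat, forall G, mixed_ok G -> beta G <= f (alpha G).

Definition incomparable (alpha beta : mixed_graph -> nat) : Prop :=
  ~ bounds alpha beta /\ ~ bounds beta alpha.

From mathcomp Require Import all_boot zify.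
From Stdlib Require Import ClassicalEpsilon.

Set Implicit Arguments.
Unset Strict Implicit.
Unset Printing Implicit Defensive.

(* Both separations use two families of acyclic mixed graphs indexed by a
   pattern B, a relation on {0, ..., q}.  In the layered graph the arcs go from a
   middle layer to a left layer along B and from the left layer to a right layer
   along a matching, and edges fill in the remaining pairs, so the underlying
   graph is complete bipartite whatever B is, while in the closure the middle
   layer reaches the right layer exactly along B.  In the path graph the arcs
   form a directed Hamiltonian path, so the underlying graph of the closure is
   complete, while edges between the two halves of the path realise B.

   Taking B diagonal (resp. empty) makes one neighbourhood diversity at most 2
   and the other one large.  For cliquewidth we count: a k-expression can be
   normalised to a binary tree whose nodes record a join relation and a
   relabelling on k labels, so graphs of cliquewidth at most k on n vertices
   number at most 2^(O(k^2 n + n log n)), fewer than the 2^((q+1)^2) patterns;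
   hence some pattern gives large cliquewidth on the side where B is visible,
   while the other side has cliquewidth at most 2. *)

(** * Neighbourhood diversity *)

Section NeighbourhoodDiversity.
Variables (n : nat) (e : rel 'I_n).

Lemma same_type_refl u : same_type e u u.
Proof. by apply/forallP=> w; apply/implyP. Qed.

Lemma same_type_sym u v : same_type e u v -> same_type e v u.
Proof.
move/forallP=> H; apply/forallP=> w; apply/implyP=> /andP[wv wu].
by have := implyP (H w); rewrite wu wv eq_sym => /(_ isT).
Qed.

Lemma nd_geq_of_inj m (h : 'I_m -> 'I_n) :
  (forall i j, same_type e (h i) (h j) -> i = j) -> m <= nd e.
Proof.
move=> hh; have inj : injective (fun i => [set v | same_type e (h i) v]).
  move=> i j E; apply: hh.
  have : h j \in [set v | same_type e (h j) v] by rewrite inE same_type_refl.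
  by rewrite -E inE.
rewrite -[m]card_ord -cardsT -(card_imset _ inj); apply: subset_leq_card.
by apply/subsetP=> X /imsetP[i _ ->]; exact: imset_f.
Qed.

Hypothesis e_sym : forall u v, e u v = e v u.

Lemma same_type_trans u v w : same_type e u v -> same_type e v w -> same_type e u w.
Proof.
have stE x y z : same_type e x y -> z != x -> z != y -> e x z = e y z.
  by move/forallP/(_ z)=> /implyP H zx zy; apply/eqP/H; rewrite zx zy.
move=> uv vw; apply/forallP=> x; apply/implyP=> /andP[xu xw]; apply/eqP.
case: (eqVneq x v) => [xv|xv]; last by rewrite (stE _ _ _ uv) // (stE _ _ _ vw).
subst x; case: (eqVneq u w) => [<-|uw] //.
have [vu wu wv] : [/\ u != v, w != u & w != v] by rewrite !(eq_sym w) eq_sym.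
by rewrite e_sym (stE _ _ _ vw vu uw) [e w u]e_sym (stE _ _ _ uv wu wv) e_sym.
Qed.

Lemma nd_leq_of_map c (g : 'I_n -> 'I_c) :
  (forall u v, g u = g v -> same_type e u v) -> nd e <= c.
Proof.
move=> hg; pose h (i : 'I_c) := [set v | [exists u, (g u == i) && same_type e u v]].
have classE u : [set v | same_type e u v] = h (g u).
  apply/setP=> v; rewrite !inE; apply/idP/existsP => [uv|[u' /andP[/eqP gu' u'v]]].
    by exists u; rewrite eqxx.
  exact: same_type_trans (same_type_sym (hg _ _ gu')) u'v.
apply: leq_trans (subset_leq_card (_ : _ \subset h @: [set: 'I_c])) _.
  by apply/subsetP=> X /imsetP[u _ ->]; rewrite classE imset_f ?inE.
by rewrite (leq_trans (leq_imset_card _ _)) // cardsT card_ord.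
Qed.

End NeighbourhoodDiversity.

(** * Cliquewidth *)

Lemma decidebP (P : Prop) : reflect P (decideb P).
Proof. by rewrite /decideb; case: excluded_middle_informative => h; constructor. Qed.

Lemma cw_ok_leq k k' t : k <= k' -> cw_ok k t -> cw_ok k' t.
Proof.
move=> kk; elim: t => //= [i | a IHa b IHb | i j a IH | i j a IH].
- by move=> h; apply: leq_trans kk.
- by case/andP=> /IHa -> /IHb.
- by case/and3P=> ik jk /IH ->; rewrite (leq_trans ik kk) (leq_trans jk kk).
- by case/and4P=> ik jk -> /IH ->; rewrite (leq_trans ik kk) (leq_trans jk kk).
Qed.

Lemma cw_le_leq n (e : rel 'I_n) k k' : k <= k' -> cw_le e k -> cw_le e k'.
Proof.
move=> kk [n0|[t [f [ok ? ? ? ?]]]]; [by left | right].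
by exists t, f; split => //; apply: cw_ok_leq ok.
Qed.

Lemma cw_le_of_cw_leq n (e : rel 'I_n) K : cw e <= K -> K <= n -> cw_le e K.
Proof.
rewrite /cw => cK Kn; set P := fun k => decideb (cw_le e k).
have [hP|] := boolP (has P (iota 0 n.+1)).
  have hlt : find P (iota 0 n.+1) < n.+1 by rewrite -{2}(size_iota 0 n.+1) -has_find.
  by have /decidebP := nth_find 0 hP; rewrite nth_iota ?add0n //; apply: cw_le_leq.
rewrite has_find -leqNgt size_iota => h.
by have := leq_trans h (leq_trans cK Kn); rewrite ltnn.
Qed.

Lemma cw_leq_of_cw_le n (e : rel 'I_n) k : cw_le e k -> k <= n -> cw e <= k.
Proof.
move=> hk kn; rewrite /cw leqNgt; apply/negP => /(before_find 0).
by rewrite nth_iota ?add0n // => /decidebP.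
Qed.

Fixpoint edgeless_expr (m l : nat) : cwterm :=
  if m is m'.+1 then CUnion (edgeless_expr m' l) (CVert l) else CVert l.

Lemma edgeless_expr_size m l : cw_size (edgeless_expr m l) = m.+1.
Proof. by elim: m => //= m ->; rewrite addn1. Qed.

Lemma edgeless_expr_label m l u : cw_label (edgeless_expr m l) u = l.
Proof. by elim: m u => //= m IH u; case: ifP. Qed.

Lemma edgeless_expr_edge m l u v : cw_edge (edgeless_expr m l) u v = false.
Proof. by elim: m u v => //= m IH u v; rewrite IH; case: ifP => //; case: ifP. Qed.

Lemma edgeless_expr_ok k m l : l < k -> cw_ok k (edgeless_expr m l).
Proof. by move=> lk; elim: m => //= m ->. Qed.

Definition biclique_expr m r := CJoin 0 1 (CUnion (edgeless_expr m 1) (edgeless_expr r 0)).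

Lemma biclique_expr_edge m r u v :
  cw_edge (biclique_expr m r) u v = ((u < m.+1) != (v < m.+1)).
Proof.
rewrite /= !edgeless_expr_edge !edgeless_expr_size !edgeless_expr_label !if_same /=.
case: (ltnP u m.+1) => hu; case: (ltnP v m.+1) => hv; rewrite /= ?andbF ?andbT //.
  by apply/eqP => E; move: hu hv; rewrite E; lia.
by apply/eqP => E; move: hu hv; rewrite E; lia.
Qed.

Lemma cw_le_biclique m r n (e : rel 'I_n) : n = m.+1 + r.+1 ->
  (forall u v, e u v = ((u < m.+1) != (v < m.+1))) -> cw_le e 2.
Proof.
move=> nE eE; right; exists (biclique_expr m r), val; split.
- by rewrite /= !edgeless_expr_ok.
- by rewrite /= !edgeless_expr_size nE.
- exact: val_inj.
- exact: ltn_ord.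
- by move=> u v; rewrite eE biclique_expr_edge.
Qed.

Fixpoint clique_expr (m : nat) : cwterm :=
  if m is m'.+1 then CRelab 1 0 (CJoin 0 1 (CUnion (clique_expr m') (CVert 1)))
  else CVert 0.

Lemma clique_expr_size m : cw_size (clique_expr m) = m.+1.
Proof. by elim: m => //= m ->; rewrite addn1. Qed.

Lemma clique_expr_label m u : cw_label (clique_expr m) u = 0.
Proof. by elim: m u => //= m IH u; case: (u < _); rewrite ?IH. Qed.

Lemma clique_expr_ok m : cw_ok 2 (clique_expr m).
Proof. by elim: m => //= m ->. Qed.

Lemma clique_expr_edge m u v :
  u < m.+1 -> v < m.+1 -> cw_edge (clique_expr m) u v = (u != v).
Proof.
elim: m u v => [|m IH] u v /=; first by rewrite !ltnS !leqn0 => /eqP -> /eqP ->.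
rewrite clique_expr_size !clique_expr_label => hu hv.
case: (ltnP u m.+1) => h1; case: (ltnP v m.+1) => h2 /=; rewrite ?andbT //.
- by rewrite IH // andbF orbF.
- have [-> ->] : u = m.+1 /\ v = m.+1 by lia.
  by rewrite eqxx.
Qed.

Lemma cw_le_complete m (e : rel 'I_m.+1) : (forall u v, e u v = (u != v)) -> cw_le e 2.
Proof.
move=> eE; right; exists (clique_expr m), val; split.
- exact: clique_expr_ok.
- exact: clique_expr_size.
- exact: val_inj.
- exact: ltn_ord.
- by move=> u v; rewrite eE clique_expr_edge ?ltn_ord.
Qed.

(** * Counting graphs of bounded cliquewidth *)

(* [NNode a b R phi] is the disjoint union of [a] and [b], followed by joins of all
   label pairs in [R] and by the relabelling [phi]; [R] and [phi] act on the labels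
   of the union.  Every k-expression collapses to such a tree with n leaves. *)
Inductive cwnf :=
| NLeaf of nat
| NNode of cwnf & cwnf & rel nat & (nat -> nat).

Fixpoint nf_size (x : cwnf) : nat :=
  if x is NNode a b _ _ then nf_size a + nf_size b else 1.

Definition union_label (la lb : nat -> nat) (na u : nat) :=
  if u < na then la u else lb (u - na).

Fixpoint nf_label (x : cwnf) (u : nat) : nat :=
  match x with
  | NLeaf l => l
  | NNode a b _ phi => phi (union_label (nf_label a) (nf_label b) (nf_size a) u)
  end.

Fixpoint nf_edge (x : cwnf) (u v : nat) : bool :=
  if x is NNode a b R _ then
    let na := nf_size a in
    let l := union_label (nf_label a) (nf_label b) na in
    (if (u < na) && (v < na) then nf_edge a u v
     else if (na <= u) && (na <= v) then nf_edge b (u - na) (v - na) else false)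
    || (u != v) && R (l u) (l v)
  else false.

Definition join_rel (i j x y : nat) : bool :=
  ((x == i) && (y == j)) || ((x == j) && (y == i)).

Definition nf_relab (i j : nat) (x : cwnf) : cwnf :=
  match x with
  | NLeaf l => NLeaf (if l == i then j else l)
  | NNode a b R phi => NNode a b R (fun z => if phi z == i then j else phi z)
  end.

Definition nf_join (i j : nat) (x : cwnf) : cwnf :=
  if x is NNode a b R phi then NNode a b (fun z w => R z w || join_rel i j (phi z) (phi w)) phi
  else x.

Fixpoint nf_of_cw (t : cwterm) : cwnf :=
  match t with
  | CVert i => NLeaf i
  | CUnion a b => NNode (nf_of_cw a) (nf_of_cw b) (fun _ _ => false) id
  | CRelab i j a => nf_relab i j (nf_of_cw a)
  | CJoin i j a => nf_join i j (nf_of_cw a)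
  end.

Lemma nf_size_of_cw t : nf_size (nf_of_cw t) = cw_size t.
Proof.
elim: t => //= [a IHa b IHb | i j a | i j a]; first by rewrite IHa IHb.
  by case: (nf_of_cw a).
by case: (nf_of_cw a).
Qed.

Lemma nf_label_of_cw t u : nf_label (nf_of_cw t) u = cw_label t u.
Proof.
elim: t u => //= [a IHa b IHb | i j a IH | i j a IH] u.
- by rewrite /union_label nf_size_of_cw IHa IHb.
- by rewrite -IH; case: (nf_of_cw a).
- by rewrite -IH; case: (nf_of_cw a).
Qed.

(* A join inside a single leaf adds nothing, which is where [i != j] is used. *)
Lemma nf_edge_of_cw k t u v : cw_ok k t -> nf_edge (nf_of_cw t) u v = cw_edge t u v.
Proof.
elim: t u v => //= [a IHa b IHb | i j a IH | i j a IH] u v.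
- by case/andP=> oka okb; rewrite andbF orbF nf_size_of_cw IHa // IHb.
- by case/and3P=> _ _ oka; rewrite -IH //; case: (nf_of_cw a).
- case/and4P=> _ _ ij oka; rewrite -IH // -!nf_label_of_cw.
  case: (nf_of_cw a) => [l|a' b' R phi] /=; last first.
    by rewrite /join_rel; case: (u != v); rewrite ?andbF ?orbF //= !orbA.
  case: (u != v); rewrite //=.
  case: (l =P i) => [li|] //=; case: (l =P j) => [lj|] //=.
  by move: ij; rewrite -li -lj eqxx.
Qed.

Fixpoint nf_ok k (x : cwnf) : bool :=
  match x with
  | NLeaf l => l < k
  | NNode a b _ phi => [&& nf_ok k a, nf_ok k b & all (fun z => phi z < k) (iota 0 k)]
  end.

Lemma nf_label_lt k x u : nf_ok k x -> nf_label x u < k.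
Proof.
elim: x u => //= a IHa b IHb R phi u /and3P[oka okb /allP phi_lt]; apply: phi_lt.
by rewrite mem_iota /= add0n /union_label; case: ifP => _; [exact: IHa | exact: IHb].
Qed.

Lemma nf_ok_of_cw k t : cw_ok k t -> nf_ok k (nf_of_cw t).
Proof.
elim: t => //= [a IHa b IHb | i j a IH | i j a IH].
- by case/andP=> oka okb; rewrite IHa // IHb //=; apply/allP=> z; rewrite mem_iota.
- case/and3P=> ik jk /IH; case: (nf_of_cw a) => [l|a' b' R phi] /=; first by case: ifP.
  case/and3P=> -> -> /allP phi_lt /=; apply/allP=> z zk.
  by case: ifP => _ //; apply: phi_lt.
- by case/and4P=> _ _ _ /IH; case: (nf_of_cw a).
Qed.

(* Only the values of [R] and [phi] on labels below [k] are recorded; by [nf_ok]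
   no other values are ever looked at. *)
Definition rel_code k (R : rel nat) : seq nat :=
  [seq nat_of_bool (R z w) | z <- iota 0 k, w <- iota 0 k].

Fixpoint nf_code k (x : cwnf) : seq nat :=
  match x with
  | NLeaf l => [:: 0; l]
  | NNode a b R phi => 1 :: rel_code k R ++ map phi (iota 0 k) ++ nf_code k a ++ nf_code k b
  end.

Lemma size_rel_code k R : size (rel_code k R) = k * k.
Proof. by rewrite size_allpairs size_iota. Qed.

Lemma rel_code_inj k R R' : rel_code k R = rel_code k R' ->
  forall z w, z < k -> w < k -> R z w = R' z w.
Proof.
have allpairs_inj (f g : nat -> nat -> nat) s t :
    [seq f z w | z <- s, w <- t] = [seq g z w | z <- s, w <- t] ->
    forall z w, z \in s -> w \in t -> f z w = g z w.
  elim: s => //= x s IH /eqP; rewrite eqseq_cat ?size_map // => /andP[/eqP fg /eqP].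
  move=> /IH {}IH z w; rewrite inE => /orP[/eqP -> | zs] wt; last exact: IH.
  by move/eq_in_map: fg; apply.
move=> /allpairs_inj E z w zk wk.
by have := E z w; rewrite !mem_iota !add0n => /(_ zk wk); case: (R z w); case: (R' z w).
Qed.

(* Codes are prefix-free, hence the trailing [s] and [s']. *)
Lemma nf_code_inj k x y s s' : nf_ok k x -> nf_ok k y -> nf_code k x ++ s = nf_code k y ++ s' ->
  [/\ nf_size x = nf_size y, nf_label x =1 nf_label y, nf_edge x =2 nf_edge y & s = s'].
Proof.
elim: x y s s' => [l|a IHa b IHb R phi] [l'|a' b' R' phi'] s s' //=; first by move=> _ _ [-> ->].
move=> /and3P[oka okb _] /and3P[oka' okb' _] [].
rewrite -!catA => /eqP; rewrite eqseq_cat ?size_rel_code // => /andP[/eqP ER /eqP].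
move=> /eqP; rewrite eqseq_cat ?size_map // => /andP[/eqP Ephi /eqP E].
case: (IHa a' _ _ oka oka' E) => Ea La Ga {}E.
case: (IHb b' _ _ okb okb' E) => Eb Lb Gb ->.
have lE u : union_label (nf_label a) (nf_label b) (nf_size a) u =
            union_label (nf_label a') (nf_label b') (nf_size a') u.
  by rewrite /union_label Ea La Lb.
have l_lt u : union_label (nf_label a) (nf_label b) (nf_size a) u < k.
  by rewrite /union_label; case: ifP => _; apply: nf_label_lt.
split => //; first by rewrite Ea Eb.
- move=> u; rewrite -lE; move/eq_in_map: Ephi; apply.
  by rewrite mem_iota add0n l_lt.
- move=> u v; rewrite (rel_code_inj ER (l_lt u) (l_lt v)) !lE Ea Ga Gb.
  by case: ifP.
Qed.

Lemma size_nf_code k x : size (nf_code k x) + (k * k + k + 1) <= (k * k + k + 3) * nf_size x.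
Proof.
elim: x => [l|a IHa b IHb R phi] /=; first by rewrite muln1; lia.
rewrite !size_cat size_rel_code size_map size_iota mulnDr; lia.
Qed.

Lemma nf_code_lt k x : nf_ok k x -> all (fun z => z < k.+2) (nf_code k x).
Proof.
elim: x => [l|a IHa b IHb R phi] /=; first by move=> lk; rewrite andbT (ltn_trans lk).
case/and3P=> oka okb /allP phi_lt; rewrite !all_cat IHa // IHb // !andbT.
apply/andP; split; first by apply/allP=> z /allpairsP[[x y] /= [_ _ ->]]; case: (R x y).
by apply/allP=> z /mapP[x xk ->]; have := phi_lt x xk; lia.
Qed.

Lemma nth_cat_nseq0 (s : seq nat) m i : nth 0 (s ++ nseq m 0) i = nth 0 s i.
Proof. by rewrite nth_cat nth_nseq if_same; case: ltnP => // h; rewrite nth_default. Qed.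

Lemma eq_pad_of_nth (s s' : seq nat) L : size s <= L -> size s' <= L ->
  (forall i, i < L -> nth 0 s i = nth 0 s' i) ->
  s ++ nseq (L - size s) 0 = s' ++ nseq (L - size s') 0.
Proof.
move=> sL s'L E; apply: (@eq_from_nth _ 0); first by rewrite !size_cat !size_nseq !subnKC.
by move=> i; rewrite size_cat size_nseq subnKC // => iL; rewrite !nth_cat_nseq0 E.
Qed.

Definition code_len k n := (k * k + k + 3) * n.

Definition cw_code k n (t : cwterm) : {ffun 'I_(code_len k n) -> 'I_k.+2} :=
  [ffun i : 'I_(code_len k n) => inord (nth 0 (nf_code k (nf_of_cw t)) i)].

Lemma cw_code_inj k n t t' : cw_ok k t -> cw_ok k t' -> cw_size t = n -> cw_size t' = n ->
  cw_code k n t = cw_code k n t' -> cw_edge t =2 cw_edge t'.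
Proof.
move=> ok ok' sz sz' E u v; rewrite -(nf_edge_of_cw _ _ ok) -(nf_edge_of_cw _ _ ok').
have size_le t0 : cw_size t0 = n -> size (nf_code k (nf_of_cw t0)) <= code_len k n.
  move=> <-; rewrite /code_len -nf_size_of_cw.
  exact: leq_trans (leq_addr _ _) (size_nf_code _ _).
have nth_lt t0 i : cw_ok k t0 -> nth 0 (nf_code k (nf_of_cw t0)) i < k.+2.
  move=> /nf_ok_of_cw /nf_code_lt /allP lt_k.
  case: (ltnP i (size (nf_code k (nf_of_cw t0)))) => hi; first exact/lt_k/mem_nth.
  by rewrite nth_default.
have Enth i : i < code_len k n ->
    nth 0 (nf_code k (nf_of_cw t)) i = nth 0 (nf_code k (nf_of_cw t')) i.
  move=> iL; move/ffunP: E => /(_ (Ordinal iL)); rewrite !ffunE => /(congr1 val) /=.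
  by rewrite !inordK ?nth_lt.
have := eq_pad_of_nth (size_le _ sz) (size_le _ sz') Enth.
by case/(nf_code_inj (nf_ok_of_cw ok) (nf_ok_of_cw ok')).
Qed.

Lemma card_cw_le_family n k (F : finType) (g : F -> rel 'I_n.+1) :
  (forall x y, g x =2 g y -> x = y) -> (forall x, cw_le (g x) k) ->
  #|F| <= k.+2 ^ code_len k n.+1 * n.+1 ^ n.+1.
Proof.
move=> g_inj g_cw.
pose P x (tf : cwterm * ('I_n.+1 -> nat)) :=
  [/\ cw_ok k tf.1, cw_size tf.1 = n.+1, forall v, tf.2 v < n.+1
    & forall a b, g x a b = cw_edge tf.1 (tf.2 a) (tf.2 b)].
have /choice[T TP] : forall x, exists tf, P x tf.
  by move=> x; case: (g_cw x) => // -[t [f [? ? _ ? ?]]]; exists (t, f).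
pose code x := (cw_code k n.+1 (T x).1, [ffun v => inord ((T x).2 v) : 'I_n.+1]).
suff /leq_card : injective code by rewrite card_prod !card_ffun !card_ord.
move=> x y [Et Ef]; apply: g_inj => a b.
move: (TP x) (TP y) => [okx szx ltx ex] [oky szy lty ey].
have fE v : (T x).2 v = (T y).2 v.
  by move/ffunP: Ef => /(_ v); rewrite !ffunE => /(congr1 val); rewrite /= !inordK.
by rewrite ex ey (cw_code_inj okx oky szx szy Et) !fE.
Qed.

Lemma leq_mul4_exp2 m : 4 <= m -> 4 * m <= 2 ^ m.
Proof.
move=> /subnKC <-; elim: (m - 4) => // d IH.
have : 4 <= 2 ^ (4 + d) by rewrite (leq_trans _ (leq_pexp2l _ (leq_addr d 4))).
by rewrite addnS expnS; lia.
Qed.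

Lemma exp_square_dominates A : exists q, A <= q /\
  forall N, N <= 3 * q.+1 -> A ^ N * N ^ N < 2 ^ (q.+1 * q.+1).
Proof.
set a := 3 * A.+1; set m := 3 * a + 4.
have hm : 4 * m <= 2 ^ m by apply: leq_mul4_exp2; lia.
have ha : a <= 2 ^ a by apply: ltnW; apply: ltn_expl.
exists (2 ^ m).-1; rewrite prednK ?expn_gt0 //; split; first by lia.
move: hm; set p := 2 ^ m => hm [|N] Np.
  by rewrite !expn0 muln1 -{1}(expn0 2) ltn_exp2l // muln_gt0 expn_gt0.
have ap0 : 0 < a * p by rewrite muln_gt0 expn_gt0.
rewrite -expnMn; apply: (@leq_ltn_trans ((a * p) ^ (3 * p))).
  apply: leq_trans (leq_pexp2l ap0 Np); rewrite leq_exp2r //; nia.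
apply: (@leq_ltn_trans ((2 ^ (a + m)) ^ (3 * p))).
  by rewrite leq_exp2r ?muln_gt0 ?expn_gt0 // expnD leq_mul.
by rewrite -expnM ltn_exp2l //; nia.
Qed.

Notation pattern q := {ffun 'I_q.+1 * 'I_q.+1 -> bool}.

Definition pat q (B : pattern q) (i j : nat) : bool := B (inord i, inord j).

Lemma card_pattern q : #|{: pattern q}| = 2 ^ (q.+1 * q.+1).
Proof. by rewrite card_ffun card_prod card_ord card_bool. Qed.

Lemma cw_unbounded_on_encodings K : exists q, forall n (g : pattern q -> rel 'I_n.+1),
  q <= n < 3 * q.+1 -> (forall x y, g x =2 g y -> x = y) -> exists x, K < cw (g x).
Proof.
have [q [Kq dom]] := exp_square_dominates (K.+2 ^ (K * K + K + 3)).
have KA : K <= K.+2 ^ (K * K + K + 3).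
  by apply: ltnW; apply: leq_trans (ltn_expl _ (isT : 1 < K.+2)); lia.
exists q => n g /andP[qn nq] g_inj.
apply/existsP; apply: contraT; rewrite negb_exists => /forallP g_cw.
have /(card_cw_le_family g_inj) : forall x, cw_le (g x) K.
  by move=> x; apply: cw_le_of_cw_leq; [rewrite leqNgt g_cw | lia].
have := dom _ nq; rewrite -expnM -/(code_len K n.+1) => small.
by rewrite card_pattern => /leq_ltn_trans/(_ small); rewrite ltnn.
Qed.

(** * Two families of acyclic mixed graphs *)

Lemma connect_invariant (T : finType) (e : rel T) (P : pred T) :
  (forall x y, P x -> e x y -> P y) -> forall x y, P x -> connect e x y -> P y.
Proof.
move=> eP x y Px /connectP[s xs ->]; elim: s x Px xs => //= z s IH x Px /andP[xz zs].
exact: IH (eP _ _ Px xz) zs.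
Qed.

Lemma connect_rank_leq (T : finType) (e : rel T) (r : T -> nat) :
  (forall x y, e x y -> r x < r y) -> forall x y, connect e x y -> r x <= r y.
Proof.
move=> e_rank x y; apply: (@connect_invariant _ e (fun z => r x <= r z) _ x y (leqnn _)).
by move=> y' z xy' /e_rank/ltnW; apply: leq_trans.
Qed.

Lemma acyclic_of_rank (T : finType) (e : rel T) (r : T -> nat) :
  (forall x y, e x y -> r x < r y) -> forall x y, e x y -> ~~ connect e y x.
Proof.
move=> e_rank x y /e_rank xy; apply/negP => /(connect_rank_leq e_rank).
by rewrite leqNgt xy.
Qed.

(* Vertices [0, p), [p, 2p) and [2p, 3p) form layers 0, 1 and 2. *)
Definition layer p u := (p <= u) + (2 * p <= u).
Definition layer_pos p u := u - layer p u * p.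

Lemma layer_le2 p u : layer p u <= 2.
Proof. by rewrite /layer; case: (p <= u); case: (2 * p <= u). Qed.

Lemma layer_eq0 p u : (layer p u == 0) = (u < p).
Proof. by rewrite /layer; case: leqP => h1; case: leqP => h2 //=; lia. Qed.

Lemma layerE p u l : l <= 2 -> l * p <= u < l.+1 * p ->
  layer p u = l /\ layer_pos p u = u - l * p.
Proof.
move=> l2 /andP[lo hi]; suff lE : layer p u = l by rewrite /layer_pos lE.
rewrite /layer; move: l2 lo hi; case: l => [|[|[|l]]] //= _; rewrite ?mul1n ?mul0n => lo hi;
  case: leqP => h1; case: leqP => h2 //=; lia.
Qed.

Ltac case_layers p u v :=
  have := layer_le2 p u; have := layer_le2 p v;
  case: (layer p u) => [|[|[|?]]]; case: (layer p v) => [|[|[|?]]] //= _ _.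

Section LayeredGraph.
Variables (q : nat) (B : pattern q).
Local Notation p := q.+1.
Local Notation V := 'I_(3 * q + 2).+1.

Definition layered_arc (u v : nat) :=
  (layer p u == 1) && (layer p v == 0) && pat B (layer_pos p u) (layer_pos p v)
  || (layer p u == 0) && (layer p v == 2) && (layer_pos p u == layer_pos p v).

(* The edges fill in exactly the non-arcs between layer 0 and the other layers. *)
Definition layered_edge (u v : nat) :=
  [|| (layer p u == 1) && (layer p v == 0) && ~~ pat B (layer_pos p u) (layer_pos p v),
      (layer p u == 0) && (layer p v == 1) && ~~ pat B (layer_pos p v) (layer_pos p u),
      (layer p u == 0) && (layer p v == 2) && (layer_pos p u != layer_pos p v)
    | (layer p u == 2) && (layer p v == 0) && (layer_pos p v != layer_pos p u)].

Definition layered_graph : mixed_graph :=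
  @MixedGraph (3 * q + 2).+1 (fun u v => layered_edge u v) (fun u v => layered_arc u v).

Lemma layered_ok : mixed_ok layered_graph.
Proof.
pose rank (u : V) := if layer p u == 1 then 0 else if layer p u == 0 then 1 else 2.
have arc_rank (u v : V) : layered_arc u v -> rank u < rank v.
  by rewrite /rank /layered_arc; case_layers q.+1 u v; rewrite ?andbF.
split => /=.
- by move=> u; rewrite /layered_edge; case_layers q.+1 u u.
- by move=> u v; rewrite /layered_edge; case_layers q.+1 u v; rewrite ?orbF.
- by move=> u; rewrite /layered_arc; case_layers q.+1 u u; rewrite eqxx.
- by move=> u v; rewrite /layered_edge /layered_arc; case_layers q.+1 u v; rewrite ?orbF ?andbF.
- exact: acyclic_of_rank arc_rank.
Qed.

Lemma layered_underlying (u v : V) :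
  underlying layered_graph u v = ((u < p) != (v < p)).
Proof.
rewrite /underlying /= /layered_edge /layered_arc -!layer_eq0.
case_layers q.+1 u v; rewrite ?orbF ?andbF ?orbT //=; first by case: pat.
all: by rewrite orbC orbN.
Qed.

Lemma reach_layer2 (u v : V) : layer p u = 2 -> reach layered_graph u v = false.
Proof. by move=> lu; apply/existsP => -[w /andP[]]; rewrite /= /layered_arc lu. Qed.

Lemma reach_layer1_layer2 (u v : V) : layer p u = 1 -> layer p v = 2 ->
  reach layered_graph u v = pat B (layer_pos p u) (layer_pos p v).
Proof.
move=> lu lv; apply/existsP/idP => [[w /andP[]]|uBv].
  rewrite /= /layered_arc lu /= orbF => /andP[/eqP lw uBw] wv.
  pose P (x : V) := (x == w) || (layer p x == 2) && (layer_pos p x == layer_pos p w).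
  have P_inv (x y : V) : P x -> layered_arc x y -> P y.
    case/orP=> [/eqP ->|/andP[/eqP lx _]]; rewrite /layered_arc ?lx ?lw //=.
    by case/andP=> ly /eqP xy; rewrite /P ly xy eqxx orbT.
  have Pw : P w by rewrite /P eqxx.
  have /orP[/eqP vw|/andP[_ /eqP ->]] // := connect_invariant P_inv Pw wv.
  by move: lv; rewrite vw lw.
have pos_lt : layer_pos p v < p.
  by move: lv; rewrite /layer_pos /layer => ->; case: leqP; case: leqP; have := ltn_ord v; lia.
have pos_lt' : layer_pos p v < (3 * q + 2).+1 by lia.
have [lw pw] : layer p (Ordinal pos_lt') = 0 /\ layer_pos p (Ordinal pos_lt') = layer_pos p v.
  by have := @layerE p (Ordinal pos_lt') 0 isT; rewrite mul0n subn0 /= mul1n pos_lt; apply.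
exists (Ordinal pos_lt'); rewrite /= /layered_arc lu lw pw uBv /=; apply: connect1.
by rewrite /layered_arc lw lv pw !eqxx.
Qed.

Lemma layered_closure_pattern (i j : 'I_p) :
  underlying (tclosure layered_graph) (inord (p + i)) (inord (2 * p + j)) = B (i, j).
Proof.
have [ui vj] : p + i < (3 * q + 2).+1 /\ 2 * p + j < (3 * q + 2).+1.
  by have := ltn_ord i; have := ltn_ord j; lia.
have [lu pu] : layer p (inord (p + i) : V) = 1 /\ layer_pos p (inord (p + i) : V) = i.
  rewrite inordK //; have [] := @layerE p (p + i) 1 isT; first by have := ltn_ord i; lia.
  by rewrite mul1n addKn.
have [lv pv] : layer p (inord (2 * p + j) : V) = 2 /\ layer_pos p (inord (2 * p + j) : V) = j.
  rewrite inordK //; have [] := @layerE p (2 * p + j) 2 isT; first by have := ltn_ord j; lia.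
  by rewrite addKn.
rewrite /underlying /= (reach_layer2 _ lv) (reach_layer1_layer2 lu lv).
by rewrite /layered_edge lu lv /= !orbF /pat pu pv !inord_val.
Qed.

End LayeredGraph.

Section PathGraph.
Variables (q : nat) (B : pattern q).
Local Notation p := q.+1.
Local Notation V := 'I_(2 * p).+1.

(* Vertex [p] separates the two halves, so that no arc of the path joins them. *)
Definition path_edge (u v : nat) :=
  (u < p) && (p < v) && pat B u (v - p.+1) || (v < p) && (p < u) && pat B v (u - p.+1).

Definition path_graph : mixed_graph :=
  @MixedGraph (2 * p).+1 (fun u v => path_edge u v) (fun u v => v == u.+1 :> nat).

Lemma path_arc_rank (u v : V) : mg_A path_graph u v -> u < v.
Proof. by move=> /eqP /= ->. Qed.

Lemma connect_path_succ (u v : V) : u <= v -> connect (mg_A path_graph) u v.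
Proof.
move=> uv; have [d vE] : exists d, (v : nat) = u + d by exists (v - u); lia.
elim: d v uv vE => [|d IH] v uv vE; first by rewrite (val_inj (etrans vE (addn0 u))) connect0.
have ud : u + d < (2 * p).+1 by have := ltn_ord v; lia.
apply: connect_trans (IH (Ordinal ud) (leq_addr _ _) erefl) (connect1 _).
by rewrite /= vE addnS.
Qed.

Lemma path_reach (u v : V) : reach path_graph u v = (u < v).
Proof.
apply/existsP/idP => [[w /andP[/eqP uw /(connect_rank_leq path_arc_rank)]]|uv].
  by rewrite uw.
have us : u.+1 < (2 * p).+1 by have := ltn_ord v; lia.
by exists (Ordinal us); rewrite /= eqxx connect_path_succ.
Qed.

Lemma path_ok : mixed_ok path_graph.
Proof.
split => /=.
- by move=> u; rewrite /path_edge; apply/negP => /orP[] /andP[/andP[]]; lia.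
- by move=> u v; rewrite /path_edge orbC.
- by move=> u; apply/eqP; lia.
- by move=> u v /orP[] /andP[/andP[]] *; split; apply/negP => /eqP; lia.
- exact: acyclic_of_rank path_arc_rank.
Qed.

Lemma path_closure_complete (u v : V) : underlying (tclosure path_graph) u v = (u != v).
Proof.
rewrite /underlying /= !path_reach -val_eqE /=.
case: (ltngtP u v) => [uv|vu|/val_inj uv]; rewrite ?orbT //.
by rewrite uv /= !orbF !andbT; apply/negbTE; case: path_ok => /(_ v).
Qed.

Lemma path_underlying_pattern (i j : 'I_p) :
  underlying path_graph (inord i) (inord (p.+1 + j)) = B (i, j).
Proof.
have [ui vj] : (i : nat) < (2 * p).+1 /\ p.+1 + j < (2 * p).+1.
  by have := ltn_ord i; have := ltn_ord j; lia.
rewrite /underlying /= /path_edge !inordK // addKn /pat !inord_val.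
have [-> -> -> ->] : [/\ (i < p < p.+1 + j) = true, (p.+1 + j < p < i) = false,
    (p.+1 + j == i.+1) = false & ((i : nat) == (p.+1 + j).+1) = false].
  by have := ltn_ord i; split; lia.
by rewrite !orbF.
Qed.

End PathGraph.

Definition diag_pattern q : pattern q := [ffun ij => ij.1 == ij.2].
Definition empty_pattern q : pattern q := [ffun => false].

Lemma nd_layered q (B : pattern q) : nd_param (layered_graph B) <= 2.
Proof.
apply: (@nd_leq_of_map _ _ _ 2 (fun u => if (u : nat) < q.+1 then ord0 else ord_max)).
  by move=> x y; rewrite !layered_underlying [in RHS]eq_sym.
move=> u v uv; apply/forallP => w; apply/implyP => _; rewrite !layered_underlying.
by move: uv; case: ifP; case: ifP => // -> ->.
Qed.

(* Middle vertices [i] and [j] are told apart by right vertex [i]. *)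
Lemma nd_closure_layered_diag q : q.+1 <= nd_plus_param (layered_graph (diag_pattern q)).
Proof.
apply: (@nd_geq_of_inj _ _ _ (fun i : 'I_q.+1 => inord (q.+1 + i))) => i j /forallP.
move=> /(_ (inord (2 * q.+1 + i))) /implyP; rewrite !layered_closure_pattern !ffunE /= eqxx.
have [li lj lw] : [/\ q.+1 + i < (3 * q + 2).+1, q.+1 + j < (3 * q + 2).+1
                 & 2 * q.+1 + i < (3 * q + 2).+1].
  by have := ltn_ord i; have := ltn_ord j; split; lia.
suff ne : (inord (2 * q.+1 + i) != inord (q.+1 + i) :> 'I_(3 * q + 2).+1)
        && (inord (2 * q.+1 + i) != inord (q.+1 + j) :> 'I_(3 * q + 2).+1).
  by move=> /(_ ne) /eqP/esym/eqP ->.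
by apply/andP; split; apply/eqP => /(congr1 val); rewrite /= !inordK //; have := ltn_ord j; lia.
Qed.

Lemma nd_closure_path q (B : pattern q) : nd_plus_param (path_graph B) <= 1.
Proof.
apply: (@nd_leq_of_map _ _ _ 1 (fun _ => ord0)).
  by move=> x y; rewrite !path_closure_complete eq_sym.
move=> u v _; apply/forallP => w; apply/implyP => /andP[wu wv].
by rewrite !path_closure_complete (eq_sym u) (eq_sym v) wu wv.
Qed.

(* The underlying graph is a path, in which [3 i] and [3 j] are told apart by [3 i + 1]. *)
Lemma nd_path_empty m : m.+1 <= nd_param (path_graph (empty_pattern (3 * m))).
Proof.
set q := 3 * m; have under (u v : 'I_(2 * q.+1).+1) :
    underlying (path_graph (empty_pattern q)) u v = (v == u.+1 :> nat) || (u == v.+1 :> nat).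
  by rewrite /underlying /= /path_edge /pat !ffunE !andbF.
have lt3 (i : 'I_m.+1) : 3 * i < (2 * q.+1).+1 by have := ltn_ord i; lia.
apply: (@nd_geq_of_inj _ _ _ (fun i => Ordinal (lt3 i))).
suff distinct (i j : 'I_m.+1) : i < j ->
    ~~ same_type (underlying (path_graph (empty_pattern q))) (Ordinal (lt3 i)) (Ordinal (lt3 j)).
  move=> i j st; case: (ltngtP i j) => [ij|ji|/val_inj //].
    by move: (distinct _ _ ij); rewrite st.
  by move: (distinct _ _ ji); rewrite (same_type_sym st).
move=> ij; have w_lt : 3 * i + 1 < (2 * q.+1).+1 by have := ltn_ord j; lia.
apply/negP => /forallP /(_ (Ordinal w_lt)) /implyP.
have w_ne : (Ordinal w_lt != Ordinal (lt3 i)) && (Ordinal w_lt != Ordinal (lt3 j)).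
  by apply/andP; split; apply/eqP => /(congr1 val) /=; lia.
move=> /(_ w_ne) /eqP; rewrite !under /=.
have [-> ->] : (3 * i + 1 == (3 * j).+1) = false /\ (3 * j == (3 * i + 1).+1) = false.
  by split; lia.
by rewrite addn1 eqxx.
Qed.

Lemma cw_layered q (B : pattern q) : cw_param (layered_graph B) <= 2.
Proof.
apply: cw_leq_of_cw_le; last by rewrite /=; lia.
by apply: (@cw_le_biclique q (2 * q + 1)); [rewrite /=; lia | exact: layered_underlying].
Qed.

Lemma cw_closure_path q (B : pattern q) : cw_plus_param (path_graph B) <= 2.
Proof.
apply: cw_leq_of_cw_le; last by rewrite /=; lia.
by apply: cw_le_complete => u v; rewrite path_closure_complete.
Qed.

Lemma leq_bigmax_ord (f : nat -> nat) m x : x < m -> f x <= \max_(i < m) f i.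
Proof. by move=> xm; exact: (leq_bigmax (F := fun i : 'I_m => f i) (Ordinal xm)). Qed.

Lemma not_bounds_of_witnesses (alpha beta : mixed_graph -> nat) :
  (forall K, exists G, [/\ mixed_ok G, alpha G <= 2 & K < beta G]) -> ~ bounds alpha beta.
Proof.
move=> wit [f f_bounds]; have [G [G_ok aG bG]] := wit (\max_(i < 3) f i).
have := leq_trans (f_bounds G G_ok) (leq_bigmax_ord f (aG : alpha G < 3)).
by rewrite leqNgt bG.
Qed.

Lemma cw_closure_layered_large K : exists q (B : pattern q), K < cw_plus_param (layered_graph B).
Proof.
have [q enc] := cw_unbounded_on_encodings K; exists q.
apply: (enc _ (fun B => underlying (tclosure (layered_graph B)))) => [|B B' E].
  by apply/andP; split; lia.
apply/ffunP => -[i j].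
by have := E (inord (q.+1 + i)) (inord (2 * q.+1 + j)); rewrite !layered_closure_pattern.
Qed.

Lemma cw_path_large K : exists q (B : pattern q), K < cw_param (path_graph B).
Proof.
have [q enc] := cw_unbounded_on_encodings K; exists q.
apply: (enc _ (fun B => underlying (path_graph B))) => [|B B' E].
  by apply/andP; split; lia.
apply/ffunP => -[i j].
by have := E (inord i) (inord (q.+2 + j)); rewrite !path_underlying_pattern.
Qed.

Theorem mainTheorem19 :
  incomparable nd_param nd_plus_param /\ incomparable cw_param cw_plus_param.
Proof.
split; split; apply: not_bounds_of_witnesses => K.
- exists (layered_graph (diag_pattern K)); split; [exact: layered_ok | exact: nd_layered |].
  exact: nd_closure_layered_diag.
- exists (path_graph (empty_pattern (3 * K))); split; [exact: path_ok | | exact: nd_path_empty].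
  exact: leq_trans (nd_closure_path _) _.
- have [q [B cwB]] := cw_closure_layered_large K.
  by exists (layered_graph B); split; [exact: layered_ok | exact: cw_layered |].
- have [q [B cwB]] := cw_path_large K.
  by exists (path_graph B); split; [exact: path_ok | exact: cw_closure_path |].
Qed.
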